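(* If $u$ is a word such that the attribute $(x_i,y_i)$ of every position $i$ satisfies $x_i + y_i \leq k+1$, then $u$ has minimal length within its $\sim_k$-class.
   Context: $A$ is a finite alphabet and $k\in\mathbb{N}$. Simon's congruence $u\sim_k v$ holds iff $u$ and $v$ have the same (scattered) subwords of length at most $k$. An $\mathsf{X}$-ranker is a nonempty word over $\{\mathsf{X}_a : a\in A\}$ (''go to the next $a$-position'', starting with the first $a$-position) and a $\mathsf{Y}$-ranker a nonempty word over $\{\mathsf{Y}_a : a\in A\}$ (''go to the previous $a$-position'', starting with the last $a$-position). The attribute of position $i$ is $(x_i,y_i)$, where $x_i$ (resp. $y_i$) is the length of a shortest $\mathsf{X}$-ranker (resp. $\mathsf{Y}$-ranker) reaching $i$. *)

(* Words over a finite alphabet A are [seq A]; positions are 0-indexed. *)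
From mathcomp Require Import all_boot.
Set Implicit Arguments. Unset Strict Implicit. Unset Printing Implicit Defensive.

Section Rankers.
Variable A : finType.

Definition simon (k : nat) (u v : seq A) : Prop :=
  forall w : seq A, size w <= k -> subseq w u = subseq w v.

Definition next_pos (u : seq A) (a : A) (from : nat) : option nat :=
  let j := from + find (pred1 a) (drop from u) in
  if j < size u then Some j else None.

Definition prev_pos (u : seq A) (a : A) (bound : nat) : option nat :=
  let t := take bound u in
  let f := find (pred1 a) (rev t) in
  if f < size t then Some ((size t).-1 - f) else None.

(* X-ranker X_{a1} ... X_{an} (letters applied left to right): X_{a1} goes to
   the first a1-position, each further X_a to the next a-position strictly after
   the current one. The empty word is not a ranker (evaluates to None). *)
Fixpoint xrun (u : seq A) (from : nat) (r : seq A) : option nat :=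
  match r with
  | [::] => None
  | a :: r' =>
      match next_pos u a from with
      | None => None
      | Some j => if r' is [::] then Some j else xrun u j.+1 r'
      end
  end.
Definition xeval (u r : seq A) : option nat := xrun u 0 r.

(* Y-ranker: Y_{a1} goes to the last a1-position, each further Y_a to the
   previous a-position strictly before the current one. *)
Fixpoint yrun (u : seq A) (bound : nat) (r : seq A) : option nat :=
  match r with
  | [::] => None
  | a :: r' =>
      match prev_pos u a bound with
      | None => None
      | Some j => if r' is [::] then Some j else yrun u j r'
      end
  end.
Definition yeval (u r : seq A) : option nat := yrun u (size u) r.

Fixpoint words (n : nat) : seq (seq A) :=
  if n is n'.+1 then [seq a :: w | a <- enum A, w <- words n'] else [:: [::]].

(* x_i: length of a shortest X-ranker reaching position i (a shortest one has
   length at most size u, so searching lengths 0..size u suffices). *)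
Definition xattr (u : seq A) (i : nat) : nat :=
  find (fun n => has (fun r => xeval u r == Some i) (words n)) (iota 0 (size u).+1).
Definition yattr (u : seq A) (i : nat) : nat :=
  find (fun n => has (fun r => yeval u r == Some i) (words n)) (iota 0 (size u).+1).

End Rankers.

(* Fix a letter a.  Every position j of u carries a word al ending exactly at j
   (an X-ranker) and a word be starting exactly at j (a reversed Y-ranker) with
   |al| + |be| <= k + 1.  Going through the a-positions of u from left to right,
   one shows that every prefix of v into which al embeds contains at least as
   many a's as u has up to j.  Either al may be chosen as the witness of the
   previous a-position extended by one a, or it is shorter than that witness;
   then gluing al without its last letter to the old Y-witness gives a word of
   length at most k that embeds in neither u nor, by Simon's congruence, v, and
   this forces the old X-witness into every prefix of v that contains al.  At
   the last a-position this yields |u|_a <= |v|_a; summing over a gives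
   |u| <= |v|. *)

From mathcomp Require Import all_boot zify.
Set Implicit Arguments. Unset Strict Implicit. Unset Printing Implicit Defensive.

Section Embeddings.
Variable T : eqType.
Implicit Types (a : T) (s t w : seq T).

Lemma subseq_cons_cat_notin a s w1 w2 :
  a \notin w1 -> subseq (a :: s) (w1 ++ w2) = subseq (a :: s) w2.
Proof.
by elim: w1 => [|b w1 IHw1] //=; rewrite in_cons negb_or => /andP[/negPf-> /IHw1].
Qed.

Lemma subseq_rcons_cat_notin a s w1 w2 :
  a \notin w2 -> subseq (rcons s a) (w1 ++ w2) = subseq (rcons s a) w1.
Proof.
move=> a_w2; rewrite -subseq_rev rev_cat rev_rcons subseq_cons_cat_notin ?mem_rev //.
by rewrite -rev_rcons subseq_rev.
Qed.

Lemma subseq_rcons2 a b s t :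
  subseq (rcons s a) (rcons t b) =
  if a == b then subseq s t else subseq (rcons s a) t.
Proof.
rewrite -subseq_rev !rev_rcons /=.
by case: eqP => _; rewrite -?rev_rcons subseq_rev.
Qed.

Lemma subseq_take_take m n w : m <= n -> subseq (take m w) (take n w).
Proof. by move=> le_mn; rewrite -(take_takel w le_mn) take_subseq. Qed.

Lemma subseq_drop_drop m n w : m <= n -> subseq (drop n w) (drop m w).
Proof. by move=> le_mn; rewrite -(subnK le_mn) -drop_drop drop_subseq. Qed.

Lemma subseq_cat_cons_split s1 a s2 w :
  subseq (s1 ++ a :: s2) w ->
  exists w1 w2, [/\ w = w1 ++ a :: w2, subseq s1 w1 & subseq s2 w2].
Proof.
elim: w s1 => [|c w IHw] [|b s1] //=.
- case: eqP => [<- sub_s2 | _ /(IHw [::]) [w1 [w2 [-> _ sub_s2]]]].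
    by exists [::], w.
  by exists (c :: w1), w2.
- case: eqP => [<- /IHw | ne_bc /(IHw (b :: s1))] [w1 [w2 [-> sub_s1 sub_s2]]].
    by exists (b :: w1), w2; rewrite /= eqxx.
  by exists (c :: w1), w2; split; rewrite //= (introF eqP ne_bc).
Qed.

Lemma last_occurrence a s : a \in s ->
  exists i, [/\ i < size s, nth a s i = a & a \notin drop i.+1 s].
Proof.
rewrite -(revK s) mem_rev -has_pred1; case/split_find => _ s1 s2 /eqP-> a_s1.
rewrite rev_cat rev_rcons; exists (size (rev s2)).
rewrite size_cat /= nth_cat ltnn subnn -cat_rcons drop_size_cat ?size_rcons //.
by rewrite mem_rev -has_pred1 addnS ltnS leq_addr.
Qed.

Lemma count_mem_take_next a i j w : i < j -> j < size w -> nth a w j = a ->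
  a \notin drop i.+1 (take j w) ->
  count_mem a (take j.+1 w) = (count_mem a (take i.+1 w)).+1.
Proof.
move=> lt_ij lt_j wj a_between.
rewrite (take_nth a lt_j) wj -cats1 -(cat_take_drop i.+1 (take j w)) take_takel //.
by rewrite !count_cat (count_memPn a_between) /= eqxx; lia.
Qed.

Lemma subseq_rcons_take a s P w : subseq (rcons s a) (take P w) ->
  exists Q, subseq s (take Q w) /\ count_mem a (take Q w) < count_mem a (take P w).
Proof.
rewrite -cats1 => /subseq_cat_cons_split [w1 [w2 [def_w sub_s _]]].
have le_w1P : size w1 <= P.
  by move/(congr1 size): def_w; rewrite size_cat /= size_take_min; lia.
have take_w1 : take (size w1) w = w1 by rewrite -(take_takel _ le_w1P) def_w take_size_cat.
by exists (size w1); rewrite take_w1 def_w count_cat /= eqxx; split => //; lia.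
Qed.

(* [ends_at w i s]: the leftmost embedding of [s] into [w] ends at position [i];
   an X-ranker reaches [i] exactly when, read as a word, it ends at [i].
   Symmetrically, a Y-ranker reaches [i] when its reversal starts at [i]. *)
Definition ends_at w i s := subseq s (take i.+1 w) && ~~ subseq s (take i w).
Definition starts_at w i s := subseq s (drop i w) && ~~ subseq s (drop i.+1 w).

Lemma ends_at_size w i s : ends_at w i s -> i < size w.
Proof.
rewrite ltnNge; apply: contraTN => le_wi.
by rewrite /ends_at !take_oversize ?andbN //; lia.
Qed.

Lemma starts_at_size w i s : starts_at w i s -> i < size w.
Proof.
rewrite ltnNge; apply: contraTN => le_wi.
by rewrite /starts_at !drop_oversize ?andbN //; lia.
Qed.

Lemma ends_at_rcons_nth x0 w i s : ends_at w i s ->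
  exists2 s', s = rcons s' (nth x0 w i) & subseq s' (take i w).
Proof.
move=> ends; have /(take_nth x0) take_i1 := ends_at_size ends; move: ends.
case/lastP: s => [|s' c] /andP[]; rewrite take_i1 ?sub0seq // subseq_rcons2.
by case: eqP => [-> | _ ->]; [exists s' | ].
Qed.

Lemma starts_at_cons_nth x0 w i t : starts_at w i t ->
  exists2 t', t = nth x0 w i :: t' & subseq t' (drop i.+1 w).
Proof.
move=> starts; have /(drop_nth x0) drop_i := starts_at_size starts; move: starts.
case: t => [|c t'] /andP[]; rewrite drop_i ?sub0seq //=.
by case: eqP => [-> | _ ->]; [exists t' | ].
Qed.

Lemma ends_at_rcons a i j w s : i < j -> j < size w -> nth a w j = a ->
  a \notin drop i.+1 (take j w) -> ends_at w i s -> ends_at w j (rcons s a).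
Proof.
move=> lt_ij lt_j wj a_between /andP[sub_s not_sub_s].
rewrite /ends_at (take_nth a lt_j) wj subseq_rcons2 eqxx.
rewrite (subseq_trans sub_s (subseq_take_take _ lt_ij)) /=.
rewrite -(cat_take_drop i.+1 (take j w)) take_takel // subseq_rcons_cat_notin //.
rewrite (take_nth a (ltn_trans lt_ij lt_j)) subseq_rcons2.
case: eqP => _ //; apply: contra not_sub_s.
exact: subseq_trans (subseq_rcons s a).
Qed.

Lemma ends_at_head a s t : a \notin s -> ends_at (s ++ a :: t) (size s) [:: a].
Proof.
move=> a_s; rewrite /ends_at -addn1 takeD take_size_cat // drop_size_cat //.
by rewrite !sub1seq mem_cat mem_head orbT.
Qed.

Lemma ends_at_cons a i s t r : a \notin s -> ends_at t i r ->
  ends_at (s ++ a :: t) (size s + i.+1) (a :: r).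
Proof.
move=> a_s; rewrite /ends_at -addnS !takeD take_size_cat // drop_size_cat //.
by rewrite !subseq_cons_cat_notin //= eqxx.
Qed.

Lemma ends_at_rev w j s : j < size w ->
  ends_at (rev w) j s = starts_at w (size w - j.+1) (rev s).
Proof.
move=> lt_j; have sub_rev t : subseq s (rev t) = subseq (rev s) t.
  by rewrite -subseq_rev revK.
rewrite /ends_at /starts_at !take_rev !sub_rev.
by have -> : size w - j = (size w - j.+1).+1 by lia.
Qed.

Lemma ends_starts_not_subseq a i j w s t : i < j -> nth a w i = a ->
  ends_at w j (rcons s a) -> starts_at w i t -> ~~ subseq (s ++ t) w.
Proof.
move=> lt_ij wi /andP[_ not_ends] starts.
have [t' def_t _] := starts_at_cons_nth a starts.
move: starts; rewrite {}def_t wi => /andP[_ not_starts].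
apply/negP => /subseq_cat_cons_split [w1 [w2 [def_w sub_s sub_t']]].
case: (leqP (size w1) i) => [le_w1i | lt_iw1].
- case/negP: not_ends.
  apply: subseq_trans (subseq_take_take _ (_ : (size w1).+1 <= j)); last by lia.
  by rewrite def_w -cat_rcons take_size_cat ?size_rcons // subseq_rcons2 eqxx.
- case/negP: not_starts; apply: subseq_trans (subseq_drop_drop _ lt_iw1).
  by rewrite def_w drop_size_cat //= eqxx.
Qed.

Lemma subseq_take_exchange a Q d s t w :
  subseq (rcons d a ++ t) w -> ~~ subseq (s ++ a :: t) w ->
  subseq s (take Q w) -> subseq (rcons d a) (take Q w).
Proof.
rewrite cat_rcons => /subseq_cat_cons_split [w1 [w2 [def_w sub_d sub_t]]] not_sub sub_s.
case: (leqP Q (size w1)) => [le_Qw1 | lt_w1Q].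
- case/negP: not_sub; rewrite def_w; apply: cat_subseq; last by rewrite /= eqxx.
  by apply: subseq_trans sub_s _; rewrite def_w takel_cat // take_subseq.
- apply: subseq_trans (_ : subseq (rcons w1 a) _); first by rewrite subseq_rcons2 eqxx.
  rewrite def_w -cat_rcons -(subnKC lt_w1Q) -(size_rcons w1 a) takeD.
  by rewrite take_size_cat // prefix_subseq.
Qed.

End Embeddings.

Section Rankers.
Variable A : finType.
Implicit Types (a : A) (u r : seq A).

Lemma mem_words n r : (r \in words A n) = (size r == n).
Proof.
elim: n r => [|n IHn] [|a r] //=.
  by apply/negP => /allpairsP [[b w] [_ _]].
apply/allpairsP/idP => [[[b w]] /= [_ w_n [_ ->]] | r_n]; first by rewrite eqSS -IHn.
by exists (a, r); rewrite mem_enum IHn -eqSS.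
Qed.

Lemma next_posP u a from j : next_pos u a from = Some j ->
  exists s, [/\ drop from u = s ++ a :: drop j.+1 u, a \notin s & j = from + size s].
Proof.
rewrite /next_pos; case: ifP => // lt_j [<-].
have has_a : has (pred1 a) (drop from u) by rewrite has_find size_drop ltn_subRL.
rewrite -addnS addnC -drop_drop.
exists (take (find (pred1 a) (drop from u)) (drop from u)).
rewrite size_takel ?find_size //; case: (split_find_nth a has_a) => _ s1 s2 /eqP-> a_s1.
by rewrite cat_rcons -has_pred1.
Qed.

Lemma xrun_ends_at u from r i :
  xrun u from r = Some i -> from <= i /\ ends_at (drop from u) (i - from) r.
Proof.
elim: r from => [|a r IHr] from //=.
case def_j: next_pos => [j|] //; have [s [def_u a_s eq_j]] := next_posP def_j; subst j.
case: r IHr => [_ [<-] | b r IHr /IHr [le_ji ends]].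
  by rewrite addKn def_u leq_addr ends_at_head.
rewrite def_u; have -> : i - from = size s + (i - (from + size s).+1).+1 by lia.
by split; [lia | exact: ends_at_cons].
Qed.

Lemma xeval_ends_at u r i : xeval u r = Some i -> ends_at u i r.
Proof. by case/xrun_ends_at => _; rewrite drop0 subn0. Qed.

Lemma next_pos_nth (x0 : A) u from :
  from < size u -> next_pos u (nth x0 u from) from = Some from.
Proof. by move=> lt_from; rewrite /next_pos (drop_nth x0 lt_from) /= eqxx addn0 lt_from. Qed.

Lemma xrun_drop (x0 : A) u from n : from + n < size u ->
  xrun u from (take n.+1 (drop from u)) = Some (from + n).
Proof.
elim: n from => [|n IHn] from lt_n; rewrite (drop_nth x0) /= ?next_pos_nth; try lia.
  by rewrite take0 addn0.
rewrite IHn ?addSnnS; last by lia.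
by rewrite [drop from.+1 u](drop_nth x0) //; lia.
Qed.

Lemma xeval_take u i : i < size u -> xeval u (take i.+1 u) = Some i.
Proof.
case: u => [|x0 u'] // lt_i.
by have := xrun_drop x0 (u := x0 :: u') (from := 0) lt_i; rewrite drop0.
Qed.

Lemma prev_pos_rev u a bound : bound <= size u ->
  prev_pos u a bound =
  omap (fun j => size u - j.+1) (next_pos (rev u) a (size u - bound)).
Proof.
move=> le_bound; rewrite /prev_pos /next_pos drop_rev size_rev subKn // size_takel //.
by case: ifP => lt_f; case: ifP => lt_f' //=; try congr Some; lia.
Qed.

Lemma yrun_rev u bound r : bound <= size u ->
  yrun u bound r = omap (fun j => size u - j.+1) (xrun (rev u) (size u - bound) r).
Proof.
elim: r bound => [|a r IHr] bound le_bound //=.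
rewrite prev_pos_rev //; case def_j: next_pos => [j|] //=.
have [s [def_ru _ eq_j]] := next_posP def_j.
have lt_j : j < size u.
  by move/(congr1 size): def_ru; rewrite size_drop size_cat size_rev /=; lia.
case: r IHr => [|b r] IHr //; rewrite IHr; last by lia.
by have -> : size u - (size u - j.+1) = j.+1 by lia.
Qed.

Lemma yeval_rev u r : yeval u r = omap (fun j => size u - j.+1) (xeval (rev u) r).
Proof. by rewrite /yeval yrun_rev // subnn. Qed.

Lemma yeval_starts_at u r i : yeval u r = Some i -> starts_at u i (rev r).
Proof.
rewrite yeval_rev; case def_j: xeval => [j|] //= [<-].
have ends := xeval_ends_at def_j; have := ends_at_size ends; rewrite size_rev => lt_j.
by rewrite -ends_at_rev.
Qed.

Lemma yeval_drop u i : i < size u -> yeval u (rev (drop i u)) = Some i.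
Proof.
move=> lt_i; rewrite yeval_rev.
have -> : rev (drop i u) = take (size u - i.+1).+1 (rev u).
  by rewrite take_rev; congr (rev (drop _ _)); lia.
by rewrite xeval_take ?size_rev /=; [congr Some | ]; lia.
Qed.

Lemma find_iota_sat (p : pred nat) n m : n < m -> p n -> p (find p (iota 0 m)).
Proof.
move=> lt_nm p_n; have has_p : has p (iota 0 m).
  by apply/hasP; exists n; rewrite ?mem_iota.
have := nth_find 0 has_p; rewrite has_find size_iota in has_p.
by rewrite nth_iota ?add0n.
Qed.

Lemma find_words_witness (ev : seq A -> option nat) u i r0 :
  size r0 <= size u -> ev r0 = Some i ->
  exists2 r, ev r = Some i &
    size r = find (fun n => has (fun r => ev r == Some i) (words A n)) (iota 0 (size u).+1).
Proof.
move=> le_r0 ev_r0; set p := fun n => has _ (words A n).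
have /hasP [r] : p (find p (iota 0 (size u).+1)).
  apply: (find_iota_sat (n := size r0)) => //.
  by apply/hasP; exists r0; rewrite ?mem_words ?ev_r0.
by rewrite mem_words => /eqP size_r /eqP ev_r; exists r.
Qed.

Lemma xattr_witness u i : i < size u -> exists2 r, xeval u r = Some i & size r = xattr u i.
Proof. by move=> lt_i; apply: find_words_witness (xeval_take lt_i); rewrite size_takel. Qed.

Lemma yattr_witness u i : i < size u -> exists2 r, yeval u r = Some i & size r = yattr u i.
Proof.
move=> lt_i; apply: find_words_witness (yeval_drop lt_i).
by rewrite size_rev size_drop leq_subr.
Qed.

End Rankers.

Lemma size_count_mem (T : finType) (s : seq T) : size s = \sum_(a : T) count_mem a s.
Proof.
rewrite -sum1_size (eq_bigr (fun x => \sum_(a | a == x) 1)) => [|x _]; last first.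
  by rewrite big_pred1_eq.
rewrite (exchange_big_dep predT) //=; apply: eq_bigr => a _; rewrite -sum1_count.
by apply: eq_bigl => x; rewrite eq_sym.
Qed.

Section CountDomination.
Variables (A : finType) (k : nat) (u v : seq A).
Hypothesis simon_uv : simon k u v.
Hypothesis short_witnesses : forall i, i < size u ->
  exists al be, [/\ ends_at u i al, starts_at u i be & size al + size be <= k.+1].

Definition count_bound a j al :=
  forall P, subseq al (take P v) -> count_mem a (take j.+1 u) <= count_mem a (take P v).

Lemma count_bound_first a j al : nth a u j = a -> a \notin take j u ->
  ends_at u j al -> count_bound a j al.
Proof.
move=> uj a_before ends P sub_al; have lt_j := ends_at_size ends.
have [al' def_al _] := ends_at_rcons_nth a ends; rewrite uj in def_al.
rewrite (take_nth a lt_j) uj -cats1 count_cat (count_memPn a_before) /= eqxx add0n addn0.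
rewrite -has_count has_pred1; apply: (mem_subseq sub_al).
by rewrite def_al mem_rcons mem_head.
Qed.

Lemma count_bound_rcons a i j al : i < j -> j < size u -> nth a u j = a ->
  a \notin drop i.+1 (take j u) -> count_bound a i al -> count_bound a j (rcons al a).
Proof.
move=> lt_ij lt_j uj a_between bound_i P /subseq_rcons_take [Q [sub_al lt_count]].
rewrite (count_mem_take_next lt_ij lt_j uj a_between).
exact: leq_ltn_trans (bound_i Q sub_al) lt_count.
Qed.

Lemma count_bound_exchange a i j ali bei al : i < j -> j < size u ->
  nth a u i = a -> nth a u j = a -> a \notin drop i.+1 (take j u) ->
  ends_at u i ali -> starts_at u i bei -> size ali + size bei <= k.+1 ->
  count_bound a i ali -> ends_at u j al -> size al <= size ali -> count_bound a j al.
Proof.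
move=> lt_ij lt_j ui uj a_between ends_i starts_i size_i bound_i ends_j le_al.
have [ga def_al _] := ends_at_rcons_nth a ends_j; rewrite uj in def_al.
have [d def_ali _] := ends_at_rcons_nth a ends_i; rewrite ui in def_ali.
have [bb def_bei sub_bb] := starts_at_cons_nth a starts_i; rewrite ui in def_bei.
move: ends_j; rewrite def_al => ends_j.
have not_sub_v : ~~ subseq (ga ++ a :: bb) v.
  rewrite -def_bei -simon_uv; first exact: ends_starts_not_subseq lt_ij ui ends_j starts_i.
  rewrite size_cat -ltnS -addSn (leq_trans _ size_i) //.
  by rewrite leq_add2r -(size_rcons ga a) -def_al.
have sub_v : subseq (rcons d a ++ bb) v.
  rewrite -def_ali -simon_uv; last by move: size_i; rewrite size_cat def_bei /= addnS ltnS.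
  rewrite -(cat_take_drop i.+1 u); apply: cat_subseq _ sub_bb.
  by case/andP: ends_i.
move=> P /subseq_rcons_take [Q [sub_ga lt_count]].
rewrite (count_mem_take_next lt_ij lt_j uj a_between).
have sub_ali : subseq ali (take Q v).
  by rewrite def_ali (subseq_take_exchange sub_v not_sub_v sub_ga).
exact: leq_ltn_trans (bound_i Q sub_ali) lt_count.
Qed.

Lemma exists_count_bound a j : j < size u -> nth a u j = a ->
  exists al be, [/\ ends_at u j al, starts_at u j be, size al + size be <= k.+1
                  & count_bound a j al].
Proof.
elim/ltn_ind: j => j IHj lt_j uj.
have [al [be [ends_j starts_j size_j]]] := short_witnesses lt_j.
case: (boolP (a \in take j u)) => [a_before | a_fresh]; last first.
  by exists al, be; split => //; apply: count_bound_first.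
have [i [lt_i ui a_between]] := last_occurrence a_before.
rewrite size_takel in lt_i; last exact: ltnW.
rewrite nth_take in ui; last exact: lt_i.
have [ali [bei [ends_i starts_i size_i bound_i]]] := IHj i lt_i (ltn_trans lt_i lt_j) ui.
case: (leqP (size al) (size ali)) => [le_al | lt_ali].
  exists al, be; split => //.
  exact: count_bound_exchange lt_i lt_j ui uj a_between ends_i starts_i size_i bound_i
                              ends_j le_al.
exists (rcons ali a), be; split.
- exact: ends_at_rcons lt_i lt_j uj a_between ends_i.
- exact: starts_j.
- by rewrite size_rcons; lia.
- exact: count_bound_rcons lt_i lt_j uj a_between bound_i.
Qed.

Lemma count_mem_le a : count_mem a u <= count_mem a v.
Proof.
case: (boolP (a \in u)) => [a_u | /count_memPn-> //].
have [i [lt_i ui a_after]] := last_occurrence a_u.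
have [al [be [ends starts size_albe bound]]] := exists_count_bound lt_i ui.
have size_al : size al <= k.
  by case: be starts size_albe => [/andP[_] | b be _]; rewrite ?sub0seq //= addnS ltnS; lia.
have sub_al : subseq al (take (size v) v).
  rewrite take_size -simon_uv //; case/andP: ends => sub _.
  exact: subseq_trans sub (take_subseq _ _).
have := bound _ sub_al; rewrite take_size.
by rewrite -{2}(cat_take_drop i.+1 u) count_cat (count_memPn a_after) addn0.
Qed.

End CountDomination.

Theorem theorem8 (A : finType) (k : nat) (u : seq A) :
  (forall i, i < size u -> xattr u i + yattr u i <= k.+1) ->
  forall v : seq A, simon k u v -> size u <= size v.
Proof.
move=> attr_le v simon_uv.
rewrite !size_count_mem; apply: leq_sum => a _; apply: (count_mem_le simon_uv) => i lt_i.
have [r xr size_r] := xattr_witness lt_i.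
have [s ys size_s] := yattr_witness lt_i.
exists r, (rev s); split.
- exact: xeval_ends_at xr.
- exact: yeval_starts_at ys.
- by rewrite size_rev size_r size_s attr_le.
Qed.
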